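(* Let $u\in L_{\mathrm{up}}$ and $(\ell_1,\ell_2)\in A_u$, and let $e\in E$ be the last edge of the path in $G$ from $r$ to $\mathrm{apex}(\ell_2)$. Then $e\in P_u$.
   Context: Let $(G=(V,E),L,w)$ be a WTAP instance (spanning tree $G$, links $L\subseteq\binom V2$, weights $w>0$) with a fixed root $r\in V$, and let $F\subseteq L$ be a WTAP solution, i.e. $\bigcup_{\ell\in F}P_\ell=E$, where $P_\ell$ is the edge set of the tree path between the endpoints of $\ell$ and $V_\ell$ its vertex set. Ancestors of $v$ are the vertices on the $r$-$v$ path in $G$ (including $r$ and $v$); descendants are defined reciprocally. $\mathrm{apex}(\ell)$ is the vertex of $V_\ell$ closest to $r$. An up-link is a link $\{t,b\}$ with $t$ an ancestor of $b$; $L_{\mathrm{up}}$ is the set of up-links. For $v\in V$ let $B_v=\{\ell\in F\colon\mathrm{apex}(\ell)\text{ is a descendant of }v\}$. For an up-link $u=\{t,b\}$ with $t$ an ancestor of $b$, let $v_u$ be the ancestor of $t$ farthest from $r$ such that $P_u\subseteq\bigcup_{\ell\in B_{v_u}}P_\ell$, and fix $F_u\subseteq B_{v_u}$ inclusion-wise minimal with $P_u\subseteq\bigcup_{\ell\in F_u}P_\ell$. For $\ell\in F_u$ let $P_{u,\ell}=P_u\setminus\bigcup_{\bar\ell\in F_u\setminus\{\ell\}}P_{\bar\ell}$; these sets are nonempty, pairwise disjoint, and each is the edge set of a path. Define $\ell_1\prec_u\ell_2$ iff the edges of $P_{u,\ell_1}$ appear before those of $P_{u,\ell_2}$ on the $t$-$b$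 path in $G$. If $\ell_1\prec_u\cdots\prec_u\ell_q$ are the links of $F_u$, let $A_u=\{(\ell_i,\ell_{i+1})\colon i=1,\dots,q-1\}$. *)

From mathcomp Require Import all_boot all_order all_algebra.
Set Implicit Arguments. Unset Strict Implicit. Unset Printing Implicit Defensive.

(* A rooted spanning tree on the finite vertex set V is given by a parent
   map par : V -> V with par r = r and every vertex reaching r by iterating
   par.  Its edges are the pairs {c, par c} for c <> r; we identify such an
   edge with its lower endpoint (the child) c.  A link is a 2-element subset
   of V. *)

Section WTAP.
Variables (V : finType) (par : V -> V) (r : V).

(* a is an ancestor of v (a lies on the r-v path, including r and v). *)
Definition anc (a v : V) : bool := fconnect par v a.

Definition depth (v : V) : nat := #|[set a | anc a v]|.-1.

Definition tree_edges : {set V} := [set c | c != r].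

(* P_l: edges of the tree path between the two endpoints of the link l:
   the edge {c, par c} is on it iff c is an ancestor of exactly one endpoint. *)
Definition Ppath (l : {set V}) : {set V} :=
  [set c | (c != r) && (#|[set x in l | anc c x]| == 1)].

(* apex(l): the vertex of V_l closest to r, i.e. the deepest common ancestor
   of the endpoints of l. *)
Definition is_apex (l : {set V}) (a : V) : bool :=
  [forall x in l, anc a x] &&
  [forall b, [forall x in l, anc b x] ==> anc b a].
Definition apex (l : {set V}) : V := odflt r [pick a | is_apex l a].

Definition is_uplink (l : {set V}) : bool :=
  [exists t in l, [forall x in l, anc t x]].

Definition Bset (F : {set {set V}}) (v : V) : {set {set V}} :=
  [set l in F | anc v (apex l)].

Definition covers (S : {set {set V}}) (P : {set V}) : bool :=
  P \subset \bigcup_(l in S) Ppath l.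

Definition is_vu (F : {set {set V}}) (u : {set V}) (v : V) : Prop :=
  anc v (apex u) /\ covers (Bset F v) (Ppath u) /\
  (forall v', anc v' (apex u) -> covers (Bset F v') (Ppath u) ->
     depth v' <= depth v).

Definition is_Fu (F : {set {set V}}) (u : {set V}) (Fu : {set {set V}}) : Prop :=
  exists2 v, is_vu F u v &
    [/\ Fu \subset Bset F v, covers Fu (Ppath u) &
        forall F' : {set {set V}}, F' \proper Fu -> ~~ covers F' (Ppath u)].

Definition Pul (Fu : {set {set V}}) (u l : {set V}) : {set V} :=
  Ppath u :\: \bigcup_(l' in Fu :\ l) Ppath l'.

(* l1 ≺_u l2: every edge of P_{u,l1} appears before every edge of P_{u,l2}
   on the path from t = apex(u) down to b, i.e. is a strictly higher edge. *)
Definition precu (Fu : {set {set V}}) (u : {set V}) (l1 l2 : {set V}) : bool :=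
  [forall c1 in Pul Fu u l1, forall c2 in Pul Fu u l2,
     (c1 != c2) && anc c1 c2].

Definition in_Au (Fu : {set {set V}}) (u l1 l2 : {set V}) : Prop :=
  exists s : seq {set V},
    [/\ uniq s, [set l in s] = Fu, sorted (precu Fu u) s &
        exists2 i, i.+1 < size s &
          nth set0 s i = l1 /\ nth set0 s i.+1 = l2].

End WTAP.

From mathcomp Require Import all_boot all_order all_algebra.
Set Implicit Arguments. Unset Strict Implicit. Unset Printing Implicit Defensive.

(* Pick c1 in P_{u,l1} and c2 in P_{u,l2}; by the ordering, c1 is a strict
   ancestor of c2, and both lie on the t-b path of the up-link u.  Since c2 is
   on the path of l2, apex(l2) is an ancestor of c2, hence of b.  Since c1 is
   an ancestor of an endpoint of l2 (through c2) but not on the path of l2, it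
   is a common ancestor of both endpoints, hence an ancestor of apex(l2).  As
   c1 is not an ancestor of t, neither is apex(l2); so apex(l2) lies strictly
   below t on the t-b path, i.e. the edge above it belongs to P_u. *)

Lemma card_set2_pred (T : finType) (P : pred T) (x y : T) :
  x != y -> #|[set z in [set x; y] | P z]| = P x + P y.
Proof. by move=> xy; rewrite -sum1dep_card big_mkcondr big_setU1 ?big_set1 ?inE. Qed.

Section Ancestry.
Variables (V : finType) (par : V -> V).

Lemma anc_trans b a c : anc par a b -> anc par b c -> anc par a c.
Proof. by move=> ab bc; apply: connect_trans bc ab. Qed.

Lemma anc_iter n v : anc par (iter n par v) v.
Proof. exact: fconnect_iter. Qed.

Lemma anc_iterP a v : anc par a v -> exists n, iter n par v = a.
Proof. by move=> av; exists (findex par v a); apply: iter_findex. Qed.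

Lemma anc_total a c x : anc par a x -> anc par c x -> anc par a c || anc par c a.
Proof.
move=> /anc_iterP [i <-] /anc_iterP [j <-].
have [ij | /ltnW ji] := leqP i j.
  by rewrite -(subnK ij) iterD anc_iter orbT.
by rewrite -(subnK ji) iterD anc_iter.
Qed.

Variable r : V.
Hypothesis anc_root : forall v, anc par r v.

(* The common ancestors of l are iterates of par on any x in l; the one
   reached first is the deepest, and every other one lies above it. *)
Lemma apexP (l : {set V}) x : x \in l -> is_apex par l (apex par r l).
Proof.
move=> xl; rewrite /apex; case: pickP => [//|no_apex]; exfalso.
pose common a := [forall z in l, anc par a z].
have common_iter : exists n, common (iter n par x).
  have [n xn] := anc_iterP (anc_root x).
  by exists n; rewrite xn; apply/forall_inP => z _.
have [k /forall_inP common_k min_k] := ex_minnP common_iter.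
have /negP := no_apex (iter k par x); apply; apply/andP; split.
  exact/forall_inP.
apply/forallP => c; apply/implyP => /forall_inP common_c.
have [m xm] := anc_iterP (common_c x xl).
have [km | mk] := leqP k m.
  by rewrite -xm -(subnK km) iterD anc_iter.
by have := min_k m; rewrite xm leqNgt mk => /(_ (introT forall_inP common_c)).
Qed.

Lemma anc_apex (l : {set V}) x : x \in l -> anc par (apex par r l) x.
Proof. by move=> xl; have /andP [/forall_inP -> //] := apexP xl. Qed.

Lemma anc_apex_common (l : {set V}) x c :
  x \in l -> (forall z, z \in l -> anc par c z) -> anc par c (apex par r l).
Proof.
move=> xl common_c; have /andP [_ /forallP /(_ c) /implyP] := apexP xl.
by apply; apply/forall_inP.
Qed.

Lemma mem_Ppath2 x y c : x != y ->
  (c \in Ppath par r [set x; y]) = (c != r) && (anc par c x (+) anc par c y).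
Proof.
move=> xy; rewrite inE card_set2_pred //.
by case: (anc par c x); case: (anc par c y).
Qed.

Lemma mem_Ppath_uplink t b c : t != b -> anc par t b ->
  (c \in Ppath par r [set t; b]) = anc par c b && ~~ anc par c t.
Proof.
move=> tb anc_tb; rewrite mem_Ppath2 //.
have [anc_ct | not_anc_ct] := boolP (anc par c t).
  by rewrite (anc_trans anc_ct anc_tb) andbF.
rewrite /= andbT andbC; apply: andb_idr => _.
by apply: contraNneq not_anc_ct => ->.
Qed.

Lemma anc_apex_Ppath x y c : x != y ->
  c \in Ppath par r [set x; y] -> anc par (apex par r [set x; y]) c.
Proof.
move=> xy; rewrite mem_Ppath2 // => /andP [_].
have ax := anc_apex (set21 x y); have ay := anc_apex (set22 x y).
have [cx | not_cx] := boolP (anc par c x) => /= [not_cy | cy].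
  by case/orP: (anc_total ax cx) => // ca; rewrite (anc_trans ca ay) in not_cy.
by case/orP: (anc_total ay cy) => // ca; rewrite (anc_trans ca ax) in not_cx.
Qed.

Lemma anc_Ppath_apex x y c : x != y -> c != r ->
  c \notin Ppath par r [set x; y] -> anc par c x || anc par c y ->
  anc par c (apex par r [set x; y]).
Proof.
move=> xy; rewrite mem_Ppath2 // => -> /=.
case cx: (anc par c x); case cy: (anc par c y) => //= _ _.
by apply: (anc_apex_common (set21 x y)) => z; rewrite !inE => /orP [] /eqP ->.
Qed.

Lemma apex_mem_Ppath_uplink t b x y c1 c2 :
  t != b -> anc par t b -> x != y ->
  c1 \in Ppath par r [set t; b] -> c2 \in Ppath par r [set t; b] ->
  anc par c1 c2 ->
  c1 \notin Ppath par r [set x; y] -> c2 \in Ppath par r [set x; y] ->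
  apex par r [set x; y] \in Ppath par r [set t; b].
Proof.
move=> tb anc_tb xy c1_tb c2_tb c12 c1_xy c2_xy.
have c2_side : anc par c2 x || anc par c2 y.
  by move: c2_xy; rewrite mem_Ppath2 // => /andP [_]; case: (anc par c2 x).
have c1_side : anc par c1 x || anc par c1 y.
  by case/orP: c2_side => c2z; rewrite (anc_trans c12 c2z) ?orbT.
have apex_c2 := anc_apex_Ppath xy c2_xy.
rewrite !mem_Ppath_uplink // in c1_tb c2_tb *.
have /andP [_ not_c1t] := c1_tb; have /andP [c2b _] := c2_tb.
have c1r : c1 != r by apply: contraNneq not_c1t => ->.
have c1_apex := anc_Ppath_apex xy c1r c1_xy c1_side.
rewrite (anc_trans apex_c2 c2b) /=; apply: contra not_c1t.
exact: anc_trans c1_apex.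
Qed.

End Ancestry.

Section CoveringOrder.
Variables (V : finType) (par : V -> V) (r : V) (Fu : {set {set V}}) (u : {set V}).

Lemma uplinkP : #|u| = 2 -> is_uplink par u ->
  exists t b, [/\ t != b, anc par t b & u = [set t; b]].
Proof.
move/eqP/cards2P => [p [q [pq ->]]] /exists_inP [t tu /forall_inP anc_t].
case/set2P: tu => tE; subst t.
  by exists p, q; rewrite pq anc_t ?set22.
by exists q, p; rewrite eq_sym pq anc_t ?set21 // setUC.
Qed.

Lemma Pul_nonempty l :
  (forall F' : {set {set V}}, F' \proper Fu -> ~~ covers par r F' (Ppath par r u)) ->
  l \in Fu -> exists c, c \in Pul par r Fu u l.
Proof.
move=> min_Fu lFu; have /subsetPn [c cu not_cov] := min_Fu _ (properD1 lFu).
by exists c; rewrite inE cu andbT.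
Qed.

Lemma mem_Pul_Ppath l c : covers par r Fu (Ppath par r u) -> l \in Fu ->
  c \in Pul par r Fu u l -> c \in Ppath par r l.
Proof.
move=> /subsetP cov lFu /setDP [/cov /bigcupP [l' l'Fu cl'] not_cov].
have [<- // | l'l] := eqVneq l' l.
by case/negP: not_cov; apply/bigcupP; exists l'; rewrite // !inE l'l.
Qed.

Lemma Pul_notin_Ppath l l' c : l' \in Fu -> l' != l ->
  c \in Pul par r Fu u l -> c \notin Ppath par r l'.
Proof.
move=> l'Fu l'l /setDP [_]; apply: contra => cl'.
by apply/bigcupP; exists l'; rewrite // !inE l'l.
Qed.

Lemma precu_anc l1 l2 c1 c2 : precu par r Fu u l1 l2 ->
  c1 \in Pul par r Fu u l1 -> c2 \in Pul par r Fu u l2 -> anc par c1 c2.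
Proof. by move=> /forall_inP prec /prec /forall_inP c12 /c12 /andP []. Qed.

Lemma in_AuP l1 l2 : in_Au par r Fu u l1 l2 ->
  [/\ l1 \in Fu, l2 \in Fu, l1 != l2 & precu par r Fu u l1 l2].
Proof.
move=> [s [s_uniq sFu s_sorted [i lt_i_s [<- <-]]]].
have nth_Fu j : j < size s -> nth set0 s j \in Fu by rewrite -sFu inE; apply: mem_nth.
rewrite !nth_Fu ?(ltnW lt_i_s) // nth_uniq ?(ltnW lt_i_s) // (ltn_eqF (ltnSn i)).
split=> //; case: s {s_uniq sFu nth_Fu} s_sorted lt_i_s => [//|z p] /=.
by move=> /(pathP set0) step; apply: step.
Qed.

End CoveringOrder.

Theorem lemma9 (V : finType) (par : V -> V) (r : V)
  (L : {set {set V}}) (w : {set V} -> rat) (F : {set {set V}})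
  (Fu : {set {set V}}) (u l1 l2 : {set V}) :
  par r = r ->
  (forall v, fconnect par v r) ->
  (forall l, l \in L -> #|l| = 2) ->
  (forall l, l \in L -> (0 < w l)%R) ->
  F \subset L ->
  \bigcup_(l in F) Ppath par r l = tree_edges r ->
  u \in L -> is_uplink par u ->
  is_Fu par r F u Fu ->
  in_Au par r Fu u l1 l2 ->
  (* e = {apex l2, par (apex l2)}, the last edge of the r-apex(l2) path *)
  apex par r l2 \in Ppath par r u.
Proof.
move=> _ anc_root card2 _ FL _ uL u_up [v _ [FuB cov min_Fu]] Au.
have [l1Fu l2Fu l12 prec] := in_AuP Au.
have [c1 c1_l1] := Pul_nonempty min_Fu l1Fu.
have [c2 c2_l2] := Pul_nonempty min_Fu l2Fu.
have l2L : l2 \in L by have /subsetP/(_ _ l2Fu)/setIdP [/(subsetP FL)] := FuB.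
have /eqP/cards2P [x [y [xy l2E]]] := card2 _ l2L.
have [t [b [tb anc_tb uE]]] := uplinkP (card2 _ uL) u_up.
rewrite l2E uE; apply: (apex_mem_Ppath_uplink anc_root tb anc_tb xy (c1 := c1) (c2 := c2)).
- by rewrite -uE; case/setDP: c1_l1.
- by rewrite -uE; case/setDP: c2_l2.
- exact: precu_anc prec c1_l1 c2_l2.
- by rewrite -l2E; apply: Pul_notin_Ppath c1_l1; rewrite // eq_sym.
- by rewrite -l2E; apply: mem_Pul_Ppath c2_l2.
Qed.
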